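(* Let $K$ be a field of characteristic $0$, $e\ge2$, $A,B\in M_e(K)$ and $d\in(\mathbb{Z}/e\mathbb{Z})^\times$. Then $\mathrm{Char}_X(B\overset{d}{\ast}A)=\mathrm{Char}_X(A\overset{d^{-1}}{\ast}B)$, where $\mathrm{Char}_X$ denotes the characteristic polynomial.
   Context: For $A=[a_{i,j}],B=[b_{i,j}]\in M_e(K)$ (indices modulo $e$) and $d\in(\mathbb{Z}/e\mathbb{Z})\setminus\{0\}$, the $d$-composition is $A\overset{d}{\ast}B=\big[\sum_{s=0}^{e-1}\sum_{t=0}^{e-1}a_{s,t}b_{ds+i,dt+j}\big]_{0\le i,j\le e-1}$. *)

From mathcomp Require Import all_boot all_algebra.
Set Implicit Arguments. Unset Strict Implicit. Unset Printing Implicit Defensive.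
Import GRing.Theory.
Local Open Scope ring_scope.

Definition modidx (e : nat) (d s : nat) (i : 'I_e) : 'I_e :=
  Ordinal (ltn_pmod (d * s + i)%N (leq_ltn_trans (leq0n i) (ltn_ord i))).

Definition dcomp (K : pzRingType) (e : nat) (d : nat) (A B : 'M[K]_e) : 'M[K]_e :=
  \matrix_(i < e, j < e)
     \sum_(s < e) \sum_(t < e) A s t * B (modidx d s i) (modidx d t j).

From mathcomp Require Import all_boot all_algebra fingroup perm.
Import GRing.Theory FinRing.Theory.
Local Open Scope ring_scope.

(* Substituting s := d s' + i in the sum defining (A *_{d^-1} B)_{-d^-1 i, -d^-1 j}
   turns it into (B *_d A)_{i,j}.  Hence B *_d A is obtained from A *_{d^-1} B by
   conjugating with the permutation matrix of i |-> -d^-1 i of Z/eZ, and the two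
   matrices have the same characteristic polynomial over any commutative ring. *)

Lemma det_perm_conj {R : comPzRingType} {n} (s : 'S_n) (M : 'M[R]_n) :
  \det (\matrix_(i, j) M (s i) (s j)) = \det M.
Proof.
have -> : \matrix_(i, j) M (s i) (s j) = perm_mx s *m M *m perm_mx s^-1.
  by rewrite -row_permE -col_permE; apply/matrixP => i j; rewrite !mxE.
by rewrite !det_mulmx mulrC mulrA -det_mulmx -perm_mxM mulVg perm_mx1 det1 mul1r.
Qed.

Lemma char_poly_perm_conj {R : comNzRingType} {n} (s : 'S_n) (M : 'M[R]_n) :
  char_poly (\matrix_(i, j) M (s i) (s j)) = char_poly M.
Proof.
rewrite /char_poly -(det_perm_conj s (char_poly_mx M)); congr (\det _).
by apply/matrixP => i j; rewrite !mxE (inj_eq perm_inj).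
Qed.

Section DcompZp.

Variable p' : nat.
Local Notation p := p'.+2.

Lemma modidxE (c s i : 'Z_p) : modidx c s i = c * s + i.
Proof. by apply/val_inj; rewrite /= modnDml. Qed.

Variables (c c' : 'Z_p).
Hypothesis mul_cc' : c * c' = 1.

Let mul_c'c : c' * c = 1.
Proof. by rewrite mulrC. Qed.

Lemma scale_add_inj (k : 'Z_p) : injective (fun s : 'Z_p => c * s + k).
Proof.
apply: (can_inj (g := fun u => c' * (u - k))) => s.
by rewrite addrK mulrA mul_c'c mul1r.
Qed.

Lemma neg_scale_inj : injective (fun i : 'Z_p => - (c' * i)).
Proof.
apply: (can_inj (g := fun u => - (c * u))) => i.
by rewrite mulrN opprK mulrA mul_cc' mul1r.
Qed.

Definition neg_scale : 'S_p := perm neg_scale_inj.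

Lemma dcomp_perm_conj (R : comPzRingType) (A B : 'M[R]_p) :
  \matrix_(i, j) dcomp c' A B (neg_scale i) (neg_scale j) = dcomp c B A.
Proof.
have modidx_scale_add (s i : 'Z_p) : modidx c' (c * s + i)%R (neg_scale i) = s.
  by rewrite modidxE permE mulrDr mulrA mul_c'c mul1r addrK.
apply/matrixP => i j; rewrite !mxE (reindex_inj (scale_add_inj i)).
apply: eq_bigr => s _; rewrite (reindex_inj (scale_add_inj j)).
by apply: eq_bigr => t _; rewrite !modidx_scale_add !modidxE mulrC.
Qed.

Lemma char_poly_dcomp_inv (R : comNzRingType) (A B : 'M[R]_p) :
  char_poly (dcomp c B A) = char_poly (dcomp c' A B).
Proof. by rewrite -dcomp_perm_conj char_poly_perm_conj. Qed.

End DcompZp.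

Theorem corollary3p2 (K : fieldType) (e : nat) (he : (2 <= e)%N)
  (hchar : [pchar K] =i pred0)
  (A B : 'M[K]_e) (d : {unit 'Z_e}) :
  char_poly (dcomp (val (val d)) B A) = char_poly (dcomp (val (val (d^-1)%g)) A B).
Proof.
case: e he A B d => [|[|p']] // _ A B d.
apply: (@char_poly_dcomp_inv p' (val d) (val (d^-1)%g)).
by rewrite val_unitV mulrV ?(valP d).
Qed.
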